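(* Consider the setting described in the context. Suppose that: (i) for any constant $\kappa > 0$ there exist positive constants $K_f(\kappa,x)$, $\bar{K}_f(\kappa)$, $\beta_f(\kappa,x)$, $\bar{\beta}_f(\kappa)$, $K_Q(\kappa,x)$, $\bar{K}_Q(\kappa)$, $\beta_Q(\kappa,x)$, $\bar{\beta}_Q(\kappa)$ such that for each $n \in \mathbb{N}$: $\mathbb{P}\{\lVert f^*(x) - \hat{f}_n(x)\rVert > \kappa\} \leq K_f(\kappa,x)\exp(-n\beta_f(\kappa,x))$ for $P_X$-a.e. $x \in \mathcal{X}$; $\mathbb{P}\{\lVert Q^*(x) - \hat{Q}_n(x)\rVert > \kappa\} \leq K_Q(\kappa,x)\exp(-n\beta_Q(\kappa,x))$ for $P_X$-a.e. $x \in \mathcal{X}$; $\mathbb{P}\{\frac{1}{n}\sum_{i=1}^n \lVert f^*(x^i) - \hat{f}_n(x^i)\rVert^2 > \kappa^2\} \leq \bar{K}_f(\kappa)\exp(-n\bar{\beta}_f(\kappa))$; and $\mathbb{P}\{\frac{1}{n}\sum_{i=1}^n \lVert [\hat{Q}_n(x^i)]^{-1} - [Q^*(x^i)]^{-1}\rVert^2 > \kappa^2\} \leq \bar{K}_Q(\kappa)\exp(-n\bar{\beta}_Q(\kappa))$; (ii) for any constant $\kappa > 0$ there exist positive constants $\gamma_Q(\kappa)$, $\bar{\gamma}_Q(\kappa)$ such that for each $n \in \mathbb{N}$: $\mathbb{P}\{(\frac{1}{n}\sum_{i=1}^n \lVert [Q^*(x^i)]^{-1}\rVert^2)^{1/2}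 > (\mathbb{E}[\lVert [Q^*(X)]^{-1}\rVert^2])^{1/2} + \kappa\} \leq \exp(-n\gamma_Q(\kappa))$ and $\mathbb{P}\{(\frac{1}{n}\sum_{i=1}^n \lVert Q^*(x^i)\rVert^4)^{1/4} > (\mathbb{E}[\lVert Q^*(X)\rVert^4])^{1/4} + \kappa\} \leq \exp(-n\bar{\gamma}_Q(\kappa))$; (iii) for any constant $\kappa > 0$ there exist positive constants $\gamma_\varepsilon(\kappa)$, $\bar{\gamma}_\varepsilon(\kappa)$ such that for each $n \in \mathbb{N}$: $\mathbb{P}\{\frac{1}{n}\sum_{i=1}^n \lVert\varepsilon^i\rVert > \mathbb{E}[\lVert\varepsilon\rVert] + \kappa\} \leq \exp(-n\gamma_\varepsilon(\kappa))$ and $\mathbb{P}\{(\frac{1}{n}\sum_{i=1}^n \lVert\varepsilon^i\rVert^4)^{1/4} > (\mathbb{E}[\lVert\varepsilon\rVert^4])^{1/4} + \kappa\} \leq \exp(-n\bar{\gamma}_\varepsilon(\kappa))$ (all expectations appearing here being finite). Then for any constant $\kappa > 0$ and $P_X$-a.e. $x \in \mathcal{X}$ there exist positive constants $\tilde{K}(\kappa,x)$ and $\tilde{\beta}(\kappa,x)$ such that for all $n \in \mathbb{N}$, \[ \mathbb{P}\biggl\{\frac{1}{n}\sum_{i=1}^{n} \lVert\tilde{\varepsilon}^i_n(x)\rVert > \kappa\biggr\} \leq \tilde{K}(\kappa,x)\exp(-n\tilde{\beta}(\kappa,x)). \]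
   Context: Random vectors $Y \in \mathbb{R}^{d_y}$ and covariates $X \in \mathbb{R}^{d_x}$ satisfy $Y = f^*(X) + Q^*(X)\varepsilon$, where $f^*:\mathbb{R}^{d_x}\to\mathbb{R}^{d_y}$, $Q^*:\mathbb{R}^{d_x}\to\mathbb{R}^{d_y\times d_y}$, the zero-mean random error $\varepsilon \in \mathbb{R}^{d_y}$ is independent of $X$, and $Q^*(x) \succ 0$ for $P_X$-a.e. $x$ in the support $\mathcal{X}$ of $X$ ($P_X$ is the distribution of $X$). Data $\mathcal{D}_n = \{(y^i,x^i)\}_{i=1}^n$ are joint observations of $(Y,X)$, with error realizations $\varepsilon^i = [Q^*(x^i)]^{-1}(y^i - f^*(x^i))$. Regression estimates $\hat{f}_n$ of $f^*$ and $\hat{Q}_n$ of $Q^*$ are computed from $\mathcal{D}_n$, with $\hat{Q}_n(x) \succ 0$ almost surely for $P_X$-a.e. $x \in \mathcal{X}$. Define $\hat{\varepsilon}^i_n := [\hat{Q}_n(x^i)]^{-1}(y^i - \hat{f}_n(x^i))$ and, for $x \in \mathcal{X}$, $\tilde{\varepsilon}^i_n(x) := (\hat{f}_n(x) + \hat{Q}_n(x)\hat{\varepsilon}^i_n) - (f^*(x) + Q^*(x)\varepsilon^i)$. $\lVert\cdot\rVert$ is the Euclidean norm on vectors and the induced operator norm on matrices; $\mathbb{P}$ is the probability measure generating the data. *)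

From mathcomp Require Import all_boot all_order all_algebra.
From mathcomp Require Import all_classical all_reals all_analysis.
Import numFieldNormedType.Exports.
Import Order.TTheory GRing.Theory Num.Theory.

Set Implicit Arguments.
Unset Strict Implicit.
Unset Printing Implicit Defensive.

Local Open Scope classical_set_scope.
Local Open Scope ring_scope.

Section defs.
Variable R : realType.

Definition vnorm (n : nat) (v : 'cV[R]_n) : R :=
  Num.sqrt (\sum_(j < n) v j 0 ^+ 2).

Definition opnorm (m n : nat) (A : 'M[R]_(m, n)) : R :=
  sup [set vnorm (A *m v) | v in [set v : 'cV[R]_n | vnorm v <= 1]].

Definition posdef (n : nat) (M : 'M[R]_n) : Prop :=
  M^T = M /\ forall v : 'cV[R]_n, v != 0 -> 0 < (v^T *m M *m v) 0 0.

Definition mborel (m n : nat) : set (set 'M[R]_(m, n)) :=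
  <<s [set U : set 'M[R]_(m, n) | open U] >>.

Definition borel_map (m n p q : nat) (f : 'M[R]_(m, n) -> 'M[R]_(p, q)) : Prop :=
  forall B, mborel B -> mborel (f @^-1` B).

Context {d : measure_display} {T : measurableType d}.

Definition rand_mx (m n : nat) (Z : T -> 'M[R]_(m, n)) : Prop :=
  forall B, mborel B -> measurable (Z @^-1` B).

Variable P : probability T R.

Definition same_law (m n : nat) (Z1 Z2 : T -> 'M[R]_(m, n)) : Prop :=
  forall B, mborel B -> P (Z1 @^-1` B) = P (Z2 @^-1` B).

Definition indep2 (m n p q : nat) (Z1 : T -> 'M[R]_(m, n))
    (Z2 : T -> 'M[R]_(p, q)) : Prop :=
  forall A B, mborel A -> mborel B ->
    P (Z1 @^-1` A `&` Z2 @^-1` B) = (P (Z1 @^-1` A) * P (Z2 @^-1` B))%E.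

Definition mutual_indep (m n : nat) (Z : nat -> T -> 'M[R]_(m, n)) : Prop :=
  forall (s : seq nat) (B : nat -> set 'M[R]_(m, n)), uniq s ->
    (forall i, mborel (B i)) ->
    P (\bigcap_(i in [set i | i \in s]) (Z i @^-1` B i))
    = (\prod_(i <- s) P (Z i @^-1` B i))%E.

(** "for P_X-a.e. x, Phi x", where P_X is the law of X. *)
Definition ae_law (m n : nat) (X : T -> 'M[R]_(m, n))
    (Phi : 'M[R]_(m, n) -> Prop) : Prop :=
  P.-negligible (X @^-1` [set x | ~ Phi x]).

End defs.

Section regression.
Variables (R : realType) (d : measure_display) (T : measurableType d).
Variables (dx dy : nat).
Variables (fs : 'cV[R]_dx -> 'cV[R]_dy) (Qs : 'cV[R]_dx -> 'M[R]_dy).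
Variables (xs : nat -> T -> 'cV[R]_dx) (ys : nat -> T -> 'cV[R]_dy).
Variables (fhat : nat -> T -> 'cV[R]_dx -> 'cV[R]_dy)
          (Qhat : nat -> T -> 'cV[R]_dx -> 'M[R]_dy).

Definition eps_data (i : nat) (w : T) : 'cV[R]_dy :=
  invmx (Qs (xs i w)) *m (ys i w - fs (xs i w)).

Definition eps_hat (n i : nat) (w : T) : 'cV[R]_dy :=
  invmx (Qhat n w (xs i w)) *m (ys i w - fhat n w (xs i w)).

Definition eps_tilde (n i : nat) (w : T) (x : 'cV[R]_dx) : 'cV[R]_dy :=
  (fhat n w x + Qhat n w x *m eps_hat n i w) - (fs x + Qs x *m eps_data i w).

End regression.

From mathcomp Require Import all_boot all_order all_algebra.
From mathcomp Require Import all_classical all_reals all_analysis.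
From mathcomp Require Import ring lra.
From mathcomp Require Import measurable_realfun.
Import numFieldNormedType.Exports.
Import Order.TTheory GRing.Theory Num.Theory.
Local Open Scope classical_set_scope.
Local Open Scope ring_scope.
Set Implicit Arguments.
Unset Strict Implicit.
Unset Printing Implicit Defensive.

(* Writing A_i = Qhat_n(x^i)^-1, B_i = Q*(x^i)^-1 and r_i = y^i - f*(x^i),
   the residual splits exactly as
     eps~^i_n(x) = (fhat_n(x) - f*(x)) + Qhat_n(x) A_i (f*(x^i) - fhat_n(x^i))
                   + Qhat_n(x) (A_i - B_i) r_i + (Qhat_n(x) - Q*(x)) B_i r_i,
   and r_i = Q*(x^i) eps^i since Q*(x^i) is almost surely invertible.  Outside the
   events of (i) at level delta and of (ii)-(iii) at level 1, the empirical
   Cauchy-Schwarz inequality bounds the average of |eps~^i_n(x)| by delta L(x), with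
   L(x) depending only on |Q*(x)| and the moment levels.  Events of exponentially
   small probability are closed under finite unions, so taking delta = 1/(m+1) with
   delta L(x) <= kappa proves the claim for every x outside the countably many
   P_X-null exceptional sets of (i). *)

Section empirical_mean.
Variable R : realFieldType.

Lemma le_of_sqr_le (a b : R) : 0 <= b -> a ^+ 2 <= b ^+ 2 -> a <= b.
Proof.
move=> b0 ab; have [a0|a0] := leP a 0; first exact: le_trans a0 b0.
by rewrite -ler_sqr // ?qualifE /= ?ltW.
Qed.

Lemma sum_mul_sqr_le n (u v : 'I_n -> R) :
  (\sum_i u i * v i) ^+ 2 <= (\sum_i u i ^+ 2) * (\sum_i v i ^+ 2).
Proof.
set U := \sum_i u i ^+ 2; set V := \sum_i v i ^+ 2; set S := \sum_i u i * v i.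
have U0 : 0 <= U by apply: sumr_ge0 => i _; exact: sqr_ge0.
have [U_eq0|U_neq0] := eqVneq U 0.
  have u0 i : u i = 0.
    apply/eqP; rewrite -sqrf_eq0; apply/eqP.
    by apply: (@psumr_eq0P _ _ predT (fun i => u i ^+ 2)) => // j _; exact: sqr_ge0.
  by rewrite U_eq0 /S big1 ?expr0n ?mul0r // => i _; rewrite u0 mul0r.
have : 0 <= \sum_i (U * v i - S * u i) ^+ 2 by apply: sumr_ge0 => i _; exact: sqr_ge0.
have -> : \sum_i (U * v i - S * u i) ^+ 2 = U * (U * V - S ^+ 2).
  rewrite (eq_bigr (fun i => U ^+ 2 * v i ^+ 2 - (2 * U * S) * (u i * v i)
                             + S ^+ 2 * u i ^+ 2)) => [|i _]; last by ring.
  rewrite !big_split /= sumrN -!mulr_sumr -/U -/V -/S; ring.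
by rewrite pmulr_rge0 ?lt_def ?U_neq0 // subr_ge0.
Qed.

Definition mean n (u : 'I_n -> R) : R := n%:R^-1 * \sum_i u i.

Lemma mean_ge0 n (u : 'I_n -> R) : (forall i, 0 <= u i) -> 0 <= mean u.
Proof. by move=> u0; rewrite mulr_ge0 ?invr_ge0 ?sumr_ge0. Qed.

Lemma ler_mean n (u v : 'I_n -> R) : (forall i, u i <= v i) -> mean u <= mean v.
Proof. by move=> uv; rewrite ler_wpM2l ?invr_ge0 ?ler_sum. Qed.

Lemma meanD n (u v : 'I_n -> R) : mean (fun i => u i + v i) = mean u + mean v.
Proof. by rewrite /mean big_split mulrDr. Qed.

Lemma meanZ n c (u : 'I_n -> R) : mean (fun i => c * u i) = c * mean u.
Proof. by rewrite /mean -mulr_sumr mulrCA. Qed.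

Lemma mean_cst n c : (0 < n)%N -> mean (fun _ : 'I_n => c) = c.
Proof.
by move=> n0; rewrite /mean sumr_const card_ord -[c *+ n]mulr_natl mulKf // pnatr_eq0 -lt0n.
Qed.

Lemma mean_mul_le n (u v : 'I_n -> R) (a b : R) : 0 <= a -> 0 <= b ->
  mean (fun i => u i ^+ 2) <= a ^+ 2 -> mean (fun i => v i ^+ 2) <= b ^+ 2 ->
  mean (fun i => u i * v i) <= a * b.
Proof.
move=> a0 b0 ua vb; apply: le_of_sqr_le; first exact: mulr_ge0.
apply: le_trans (_ : mean (fun i => u i ^+ 2) * mean (fun i => v i ^+ 2) <= _).
  rewrite /mean mulrACA -expr2 exprMn ler_wpM2l ?sqr_ge0 //.
  exact: sum_mul_sqr_le.
by rewrite exprMn ler_pM ?mean_ge0 // => i; exact: sqr_ge0.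
Qed.

End empirical_mean.

Section norms.
Variable R : realType.
Implicit Types (p q : nat).

Lemma vnorm_ge0 p (v : 'cV[R]_p) : 0 <= vnorm v.
Proof. exact: sqrtr_ge0. Qed.

Lemma vnorm_sqr p (v : 'cV[R]_p) : vnorm v ^+ 2 = \sum_j v j 0 ^+ 2.
Proof. by rewrite sqr_sqrtr // sumr_ge0 // => j _; exact: sqr_ge0. Qed.

Lemma vnormZ p c (v : 'cV[R]_p) : vnorm (c *: v) = `|c| * vnorm v.
Proof.
rewrite /vnorm -sqrtr_sqr -sqrtrM ?sqr_ge0 // mulr_sumr.
by congr Num.sqrt; apply: eq_bigr => j _; rewrite mxE exprMn.
Qed.

Lemma vnorm0 p : vnorm (0 : 'cV[R]_p) = 0.
Proof. by rewrite -(scale0r 0) vnormZ normr0 mul0r. Qed.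

Lemma vnormN p (v : 'cV[R]_p) : vnorm (- v) = vnorm v.
Proof. by rewrite -scaleN1r vnormZ normrN normr1 mul1r. Qed.

Lemma vnormD p (u v : 'cV[R]_p) : vnorm (u + v) <= vnorm u + vnorm v.
Proof.
apply: le_of_sqr_le; first by rewrite addr_ge0 ?vnorm_ge0.
have cs : \sum_j u j 0 * v j 0 <= vnorm u * vnorm v.
  apply: le_of_sqr_le; first by rewrite mulr_ge0 ?vnorm_ge0.
  by rewrite exprMn !vnorm_sqr sum_mul_sqr_le.
rewrite sqrrD !vnorm_sqr (eq_bigr (fun j => u j 0 ^+ 2 + v j 0 ^+ 2
  + 2 * (u j 0 * v j 0))) => [|j _]; last by rewrite mxE; ring.
rewrite !big_split /= -mulr_sumr; lra.
Qed.

Definition frob p q (A : 'M[R]_(p, q)) : R := Num.sqrt (\sum_i \sum_j A i j ^+ 2).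

Lemma vnorm_mulmx_frob p q (A : 'M[R]_(p, q)) (v : 'cV[R]_q) :
  vnorm (A *m v) <= frob A * vnorm v.
Proof.
apply: le_of_sqr_le; first by rewrite mulr_ge0 ?sqrtr_ge0.
rewrite exprMn vnorm_sqr sqr_sqrtr; last first.
  by rewrite sumr_ge0 // => i _; rewrite sumr_ge0 // => j _; exact: sqr_ge0.
rewrite vnorm_sqr mulr_suml; apply: ler_sum => i _.
by rewrite mxE; exact: sum_mul_sqr_le.
Qed.

Lemma frob_le_mx_norm p q (A : 'M[R]_(p, q)) :
  frob A <= Num.sqrt (p * q)%:R * `|A|.
Proof.
rewrite -[`|A|]ger0_norm // -sqrtr_sqr -sqrtrM // ler_wsqrtr //.
have sum1 k : (k%:R : R) = \sum_(i < k) 1 by rewrite sumr_const card_ord.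
rewrite natrM -mulrA sum1 mulr_suml; apply: ler_sum => i _.
rewrite mul1r sum1 mulr_suml; apply: ler_sum => j _; rewrite mul1r.
rewrite -real_normK ?num_real // ler_sqr ?nnegrE //.
by rewrite [leRHS]/Num.norm /= mx_normrE; exact: (le_bigmax _ _ (i, j)).
Qed.

Lemma opnorm_ub p q (A : 'M[R]_(p, q)) (v : 'cV[R]_q) :
  vnorm v <= 1 -> vnorm (A *m v) <= opnorm A.
Proof.
move=> v1; apply: sup_upper_bound; last by exists v.
split; first by exists (vnorm (A *m v)), v.
exists (frob A) => _ [w w1 <-]; apply: le_trans (vnorm_mulmx_frob A w) _.
by rewrite ler_piMr ?sqrtr_ge0.
Qed.

Lemma opnorm_ge0 p q (A : 'M[R]_(p, q)) : 0 <= opnorm A.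
Proof.
apply: le_trans (opnorm_ub A (v := 0) _); first exact: vnorm_ge0.
by rewrite vnorm0.
Qed.

Lemma opnorm_le p q (A : 'M[R]_(p, q)) c :
  (forall v, vnorm v <= 1 -> vnorm (A *m v) <= c) -> opnorm A <= c.
Proof.
move=> Ac; apply: ge_sup; last by move=> _ [v v1 <-]; exact: Ac.
by exists (vnorm (A *m 0)), 0 => //=; rewrite vnorm0.
Qed.

Lemma vnorm_mulmx_le p q (A : 'M[R]_(p, q)) (v : 'cV[R]_q) :
  vnorm (A *m v) <= opnorm A * vnorm v.
Proof.
have [v0|v_neq0] := eqVneq (vnorm v) 0.
  by apply: le_trans (vnorm_mulmx_frob A v) _; rewrite v0 !mulr0.
have vpos : 0 < vnorm v by rewrite lt_def v_neq0 vnorm_ge0.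
have -> : A *m v = vnorm v *: (A *m ((vnorm v)^-1 *: v)).
  by rewrite -scalemxAr scalerA divff // scale1r.
rewrite vnormZ ger0_norm ?vnorm_ge0 // mulrC ler_wpM2r ?vnorm_ge0 //.
by apply: opnorm_ub; rewrite vnormZ ger0_norm ?invr_ge0 ?vnorm_ge0 // mulVf.
Qed.

Lemma opnorm_le_frob p q (A : 'M[R]_(p, q)) : opnorm A <= frob A.
Proof.
apply: opnorm_le => v v1; apply: le_trans (vnorm_mulmx_frob A v) _.
by rewrite ler_piMr ?sqrtr_ge0.
Qed.

Lemma opnormN p q (A : 'M[R]_(p, q)) : opnorm (- A) = opnorm A.
Proof.
apply/le_anti/andP; split; apply: opnorm_le => v v1.
  by rewrite mulNmx vnormN; exact: opnorm_ub.
by rewrite -vnormN -mulNmx; exact: opnorm_ub.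
Qed.

Lemma opnormD p q (A B : 'M[R]_(p, q)) : opnorm (A + B) <= opnorm A + opnorm B.
Proof.
apply: opnorm_le => v v1; rewrite mulmxDl.
by apply: le_trans (vnormD _ _) _; apply: lerD; exact: opnorm_ub.
Qed.

Lemma opnorm_continuous p q : continuous (@opnorm R p q).
Proof.
move=> A V /nbhs_ballP [e e0 eV]; apply/nbhs_ballP.
pose c : R := Num.sqrt (p * q)%:R + 1.
have c0 : 0 < c by rewrite ltr_wpDl ?sqrtr_ge0.
exists (e / c); first by rewrite /= divr_gt0.
move=> B; rewrite mx_norm_ball /ball_ => AB; apply: eV.
have AB_lip : opnorm (A - B) < e.
  apply: le_lt_trans (opnorm_le_frob _) _; apply: le_lt_trans (frob_le_mx_norm _) _.
  rewrite -(@ltr_pM2r _ c^-1) ?invr_gt0 // mulrAC; apply: le_lt_trans AB.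
  by rewrite ler_piMl // ler_pdivrMr // mul1r lerDl.
have := opnormD (B - A) A; have := opnormD (A - B) B.
rewrite !subrK -[B - A]opprB opnormN /ball /= ltr_norml => h1 h2.
apply/andP; split; lra.
Qed.

End norms.

Section roots.
Variable R : realType.

Lemma le_sqr_of_sqrt_le (y c : R) : 0 <= y -> Num.sqrt y <= c -> y <= c ^+ 2.
Proof.
move=> y0 yc; rewrite -(sqr_sqrtr y0) ler_pXn2r // ?nnegrE ?sqrtr_ge0 //.
exact: le_trans (sqrtr_ge0 _) yc.
Qed.

Lemma le_pow4_of_root4_le (y c : R) : 0 <= y -> y `^ 4^-1 <= c -> y <= c ^+ 4.
Proof.
move=> y0 yc; have y4 : (y `^ 4^-1) ^+ 4 = y.
  by rewrite -powR_mulrn ?powR_ge0 // -powRrM mulVf ?powRr1 // pnatr_eq0.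
rewrite -{1}y4 ler_pXn2r // ?nnegrE ?powR_ge0 //.
exact: le_trans (powR_ge0 _ _) yc.
Qed.

End roots.

Section residual_bound.
Variable R : realType.

Lemma residual_decomposition (K : pzRingType) p q r (f fh : 'cV[K]_p)
    (Q Qh : 'M[K]_(p, q)) (A B : 'M[K]_(q, r)) (y g gh : 'cV[K]_r) :
  (fh + Qh *m (A *m (y - gh))) - (f + Q *m (B *m (y - g))) =
  (fh - f) + Qh *m (A *m (g - gh)) + Qh *m ((A - B) *m (y - g))
  + (Qh - Q) *m (B *m (y - g)).
Proof.
have -> : y - gh = (y - g) + (g - gh) by rewrite addrA subrK.
set u := g - gh; set v := y - g; clearbody u v.
rewrite mulmxDr mulmxDr opprD addrACA -!addrA; congr (_ + (_ + _)).
rewrite addrCA; congr (_ + _).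
by rewrite mulmxBl mulmxBr mulmxBl addrA subrK.
Qed.

Lemma vnorm_mulmx2_le p q r (M : 'M[R]_(p, q)) (N : 'M[R]_(q, r)) (z : 'cV[R]_r) :
  vnorm (M *m (N *m z)) <= opnorm M * (opnorm N * vnorm z).
Proof.
by apply: le_trans (vnorm_mulmx_le _ _) _; rewrite ler_wpM2l ?opnorm_ge0 ?vnorm_mulmx_le.
Qed.

Lemma vnorm_residual_le p q r (f fh : 'cV[R]_p) (Q Qh : 'M[R]_(p, q))
    (A B : 'M[R]_(q, r)) (y g gh : 'cV[R]_r) :
  vnorm ((fh + Qh *m (A *m (y - gh))) - (f + Q *m (B *m (y - g))))
  <= vnorm (fh - f) + opnorm Qh * (opnorm A * vnorm (g - gh))
     + opnorm Qh * (opnorm (A - B) * vnorm (y - g))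
     + opnorm (Qh - Q) * (opnorm B * vnorm (y - g)).
Proof.
rewrite residual_decomposition.
by do 3 (apply: le_trans (vnormD _ _) _; apply: lerD; last exact: vnorm_mulmx2_le).
Qed.

Lemma opnorm_subr_le p q (A B : 'M[R]_(p, q)) : opnorm A <= opnorm B + opnorm (A - B).
Proof. by rewrite -{1}(subrK B A) addrC opnormD. Qed.

Lemma vnorm_residual_small p q r (f fh : 'cV[R]_p) (Q Qh : 'M[R]_(p, q))
    (A B : 'M[R]_(q, r)) (y g gh : 'cV[R]_r) (δ : R) :
  δ <= 1 -> vnorm (f - fh) <= δ -> opnorm (Q - Qh) <= δ ->
  vnorm ((fh + Qh *m (A *m (y - gh))) - (f + Q *m (B *m (y - g))))
  <= δ + (opnorm Q + 1) * (opnorm B * vnorm (g - gh) + opnorm (A - B) * vnorm (g - gh)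
                           + opnorm (A - B) * vnorm (y - g))
     + δ * (opnorm B * vnorm (y - g)).
Proof.
move=> δ1 hf hQ; apply: le_trans (vnorm_residual_le _ _ _ _ _ _ _ _ _) _.
have hQd : opnorm (Qh - Q) <= δ by rewrite -[Qh - Q]opprB opnormN.
have hQh : opnorm Qh <= opnorm Q + 1.
  by apply: le_trans (opnorm_subr_le Qh Q) _; rewrite lerD2l (le_trans hQd).
have hA := opnorm_subr_le A B.
rewrite -vnormN opprB; set u := vnorm (g - gh); set v := vnorm (y - g).
have [u0 v0] : 0 <= u /\ 0 <= v by split; exact: vnorm_ge0.
have t1 : opnorm Qh * (opnorm A * u) <= (opnorm Q + 1) * ((opnorm B + opnorm (A - B)) * u).
  by rewrite ler_pM ?mulr_ge0 ?opnorm_ge0 // ler_wpM2r.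
have t2 : opnorm Qh * (opnorm (A - B) * v) <= (opnorm Q + 1) * (opnorm (A - B) * v).
  by rewrite ler_wpM2r ?mulr_ge0 ?opnorm_ge0.
have t3 : opnorm (Qh - Q) * (opnorm B * v) <= δ * (opnorm B * v).
  by rewrite ler_wpM2r ?mulr_ge0 ?opnorm_ge0.
lra.
Qed.

End residual_bound.

Lemma mean_le_of_residual_bound (R : realFieldType) n (t b e u v : 'I_n -> R)
    (δ a cB cv : R) :
  (0 < n)%N -> 0 <= δ <= 1 -> 0 <= a -> 0 <= cB -> 0 <= cv ->
  (forall i, t i <= δ + a * (b i * u i + e i * u i + e i * v i) + δ * (b i * v i)) ->
  mean (fun i => b i ^+ 2) <= cB ^+ 2 -> mean (fun i => e i ^+ 2) <= δ ^+ 2 ->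
  mean (fun i => u i ^+ 2) <= δ ^+ 2 -> mean (fun i => v i ^+ 2) <= cv ^+ 2 ->
  mean t <= δ * (1 + a * (cB + 1 + cv) + cB * cv).
Proof.
move=> n0 /andP[δ0 δ1] a0 cB0 cv0 ht hb he hu hv.
apply: le_trans (ler_mean ht) _; rewrite !meanD !meanZ !meanD mean_cst //.
have hbu := mean_mul_le cB0 δ0 hb hu.
have heu := mean_mul_le δ0 δ0 he hu.
have hev := mean_mul_le δ0 cv0 he hv.
have hbv := mean_mul_le cB0 cv0 hb hv.
have δδ : a * (δ * δ) <= a * δ by rewrite ler_wpM2l // ler_piMr.
have := ler_wpM2l a0 hbu; have := ler_wpM2l a0 heu; have := ler_wpM2l a0 hev.
have := ler_wpM2l δ0 hbv.
lra.
Qed.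

Section residual_mean.
Variables (R : realType) (k n : nat).
Implicit Types (u : 'I_n -> R) (Qi Qhi : 'I_n -> 'M[R]_k).

Lemma mean_sqr_sqr_le u c : mean (fun i => u i ^+ 4) `^ 4^-1 <= c ->
  mean (fun i => (u i ^+ 2) ^+ 2) <= (c ^+ 2) ^+ 2.
Proof.
move=> uc; rewrite -exprM /mean (eq_bigr (fun i => u i ^+ 4)) => [|i _].
  by apply: le_pow4_of_root4_le uc; apply: mean_ge0 => i; exact: exprn_even_ge0.
by rewrite -exprM.
Qed.

Lemma mean_vnorm_sqr_le Qi (z : 'I_n -> 'cV[R]_k) cC cE :
  (forall i, Qi i \in unitmx) ->
  mean (fun i => opnorm (Qi i) ^+ 4) `^ 4^-1 <= cC ->
  mean (fun i => vnorm (invmx (Qi i) *m z i) ^+ 4) `^ 4^-1 <= cE ->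
  mean (fun i => vnorm (z i) ^+ 2) <= (cC * cE) ^+ 2.
Proof.
move=> Qi_unit hC hE.
apply: le_trans (_ : mean (fun i => opnorm (Qi i) ^+ 2
                                   * vnorm (invmx (Qi i) *m z i) ^+ 2) <= _).
  apply: ler_mean => i; rewrite -exprMn ler_sqr ?nnegrE ?vnorm_ge0 //; last first.
    by rewrite mulr_ge0 ?opnorm_ge0 ?vnorm_ge0.
  by rewrite -{1}(mulKVmx (Qi_unit i) (z i)) vnorm_mulmx_le.
by rewrite exprMn; apply: mean_mul_le; rewrite ?sqr_ge0 //; exact: mean_sqr_sqr_le.
Qed.

Lemma mean_residual_le (f fh : 'cV[R]_k) (Q Qh : 'M[R]_k) Qi Qhi
    (y g gh : 'I_n -> 'cV[R]_k) (δ cB cC cE : R) :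
  (0 < n)%N -> 0 <= δ <= 1 -> (forall i, Qi i \in unitmx) ->
  vnorm (f - fh) <= δ -> opnorm (Q - Qh) <= δ ->
  mean (fun i => vnorm (g i - gh i) ^+ 2) <= δ ^+ 2 ->
  mean (fun i => opnorm (invmx (Qhi i) - invmx (Qi i)) ^+ 2) <= δ ^+ 2 ->
  Num.sqrt (mean (fun i => opnorm (invmx (Qi i)) ^+ 2)) <= cB ->
  mean (fun i => opnorm (Qi i) ^+ 4) `^ 4^-1 <= cC ->
  mean (fun i => vnorm (invmx (Qi i) *m (y i - g i)) ^+ 4) `^ 4^-1 <= cE ->
  mean (fun i => vnorm ((fh + Qh *m (invmx (Qhi i) *m (y i - gh i)))
                        - (f + Q *m (invmx (Qi i) *m (y i - g i)))))
  <= δ * (1 + (opnorm Q + 1) * (cB + 1 + cC * cE) + cB * (cC * cE)).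
Proof.
move=> n0 /andP[δ0 δ1] Qi_unit hf hQ hg hQinv hB hC hE.
have cB0 : 0 <= cB := le_trans (sqrtr_ge0 _) hB.
have cC0 : 0 <= cC := le_trans (powR_ge0 _ _) hC.
have cE0 : 0 <= cE := le_trans (powR_ge0 _ _) hE.
apply: mean_le_of_residual_bound; rewrite ?δ0 ?δ1 ?mulr_ge0 ?addr_ge0 ?opnorm_ge0 //.
- by move=> i; exact: vnorm_residual_small.
- by apply: le_sqr_of_sqrt_le hB; apply: mean_ge0 => i; exact: sqr_ge0.
- exact: hQinv.
- exact: hg.
- exact: mean_vnorm_sqr_le.
Qed.

End residual_mean.

Section borel_measurability.
Variable R : realType.
Context {d : measure_display} {S : measurableType d}.
Implicit Types (p q : nat).

Definition mx_measurable p q (Z : S -> 'M[R]_(p, q)) :=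
  forall i j, measurable_fun setT (fun w => Z w i j).

Lemma mborel_open p q (U : set 'M[R]_(p, q)) : open U -> mborel U.
Proof. exact: sub_sigma_algebra. Qed.

Lemma continuous_borel_map p q p' q' (f : 'M[R]_(p, q) -> 'M[R]_(p', q')) :
  continuous f -> borel_map f.
Proof.
move=> /continuousP f_cont; apply: smallest_sub => [|U /f_cont]; last first.
  exact: mborel_open.
split => [|A mA|F mF]; rewrite /mborel /=.
- by rewrite preimage_set0; exact: sigma_algebra0.
- by rewrite setTD preimage_setC -setTD; exact: sigma_algebraCD.
- by rewrite preimage_bigcup; exact: sigma_algebra_bigcup.
Qed.

Lemma rand_mx_open p q (Z : S -> 'M[R]_(p, q)) :
  (forall U, open U -> measurable (Z @^-1` U)) -> rand_mx Z.
Proof.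
move=> Z_open; apply: smallest_sub => //.
split => [|A mA|F mF] /=.
- by rewrite preimage_set0.
- by rewrite setTD preimage_setC; exact: measurableC.
- by rewrite preimage_bigcup; exact: bigcupT_measurable.
Qed.

Lemma measurable_fun_continuous_comp p q (g : 'M[R]_(p, q) -> R) (Z : S -> 'M[R]_(p, q)) :
  continuous g -> rand_mx Z -> measurable_fun setT (g \o Z).
Proof.
move=> /continuousP g_cont mZ.
apply: (measurability _ (RGenOInfty.measurableE R)).
move=> _ [_ [x ->] <-]; rewrite setTI comp_preimage.
by apply: mZ; apply: mborel_open; apply: g_cont; exact: interval_open.
Qed.

Definition rat_box p q (c : 'M[rat]_(p, q)) (r : rat) : set 'M[R]_(p, q) :=
  [set N | forall i j, N i j \in `](ratr (c i j) - ratr r), (ratr (c i j) + ratr r)[].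

Lemma measurable_rat_box p q (Z : S -> 'M[R]_(p, q)) c r :
  mx_measurable Z -> measurable (Z @^-1` rat_box c r).
Proof.
move=> mZ; pose itv ij : interval R := `](ratr (c ij.1 ij.2) - ratr r), (ratr (c ij.1 ij.2) + ratr r)[.
have -> : Z @^-1` rat_box c r =
    ~` \bigcup_(ij : 'I_p * 'I_q) ~` [set w | Z w ij.1 ij.2 \in itv ij].
  apply/seteqP; split => w /= Zw; first by move=> [ij _ /=]; apply; exact: Zw.
  by move=> i j; apply: contrapT => Zw_ij; apply: Zw; exists (i, j).
apply/measurableC/countable_bigcupT_measurable => [|ij]; first exact: countableP.
have := mZ ij.1 ij.2 measurableT _ (measurable_itv (itv ij)).
by rewrite setTI => /measurableC.
Qed.

(* Every open set of matrices is a countable union of rational boxes. *)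
Lemma open_rat_box_cover p q (U : set 'M[R]_(p, q)) (N : 'M[R]_(p, q)) : open U -> U N ->
  exists c r, rat_box c r `<=` U /\ rat_box c r N.
Proof.
move=> oU UN; have /nbhs_ballP [e e0 eU] : nbhs N U by move: oU; rewrite openE; apply.
have [r /andP[r0 re]] : exists r : rat, ((0 : R) < ratr r) && (ratr r < e / 2).
  have /rat_in_itvoo [r] : (0 : R) < e / 2 by rewrite divr_gt0.
  by rewrite in_itv /=; exists r.
have Nr ij : N ij.1 ij.2 - ratr r < N ij.1 ij.2 + ratr r by lra.
have [c Nc] := @choice _ _ (fun ij (s : rat) =>
  (ratr s : R) \in `](N ij.1 ij.2 - ratr r), (N ij.1 ij.2 + ratr r)[)
  (fun ij => rat_in_itvoo (Nr ij)).
exists (\matrix_(i, j) c (i, j)), r; split => [M Mbox|i j]; last first.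
  by move: (Nc (i, j)); rewrite !mxE !in_itv /= => /andP[? ?]; apply/andP; split; lra.
apply: eU; split => // i j; move: (Mbox i j) (Nc (i, j)).
rewrite !mxE !in_itv /= => /andP[? ?] /andP[? ?].
by rewrite /ball /= ltr_norml; apply/andP; split; lra.
Qed.

Lemma mx_measurable_rand_mx p q (Z : S -> 'M[R]_(p, q)) :
  mx_measurable Z -> rand_mx Z.
Proof.
move=> mZ; apply: rand_mx_open => U oU.
pose F (cr : 'M[rat]_(p, q) * rat) : set S :=
  [set w | rat_box cr.1 cr.2 `<=` U /\ rat_box cr.1 cr.2 (Z w)].
have -> : Z @^-1` U = \bigcup_cr F cr.
  apply/seteqP; split => [w /= UZw|w [cr _ [crU crZw]]]; last exact: crU.
  by have [c [r cr]] := open_rat_box_cover oU UZw; exists (c, r).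
apply: countable_bigcupT_measurable => [|[c r]]; first exact: countableP.
rewrite /F /=; have [crU|crNU] := pselect (rat_box c r `<=` U).
  rewrite (_ : [set w | _] = Z @^-1` rat_box c r); first exact: measurable_rat_box.
  by apply/seteqP; split => w /= => [[]|].
by rewrite (_ : [set w | _] = set0) //; apply/seteqP; split => w // [].
Qed.

Lemma rand_mx_mx_measurable p q (Z : S -> 'M[R]_(p, q)) :
  rand_mx Z -> mx_measurable Z.
Proof. by move=> mZ i j; exact: measurable_fun_continuous_comp (@coord_continuous R p q i j) mZ. Qed.

Lemma mx_measurable_cst p q (M : 'M[R]_(p, q)) : mx_measurable (fun _ : S => M).
Proof. by move=> i j; exact: measurable_cst. Qed.

Lemma mx_measurableD p q (Y Z : S -> 'M[R]_(p, q)) :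
  mx_measurable Y -> mx_measurable Z -> mx_measurable (fun w => Y w + Z w).
Proof.
move=> mY mZ i j; under eq_fun do rewrite mxE.
exact: measurable_funD.
Qed.

Lemma mx_measurableB p q (Y Z : S -> 'M[R]_(p, q)) :
  mx_measurable Y -> mx_measurable Z -> mx_measurable (fun w => Y w - Z w).
Proof.
move=> mY mZ i j; under eq_fun do rewrite !mxE.
exact: measurable_funB.
Qed.

Lemma mx_measurableM p q r (Y : S -> 'M[R]_(p, q)) (Z : S -> 'M[R]_(q, r)) :
  mx_measurable Y -> mx_measurable Z -> mx_measurable (fun w => Y w *m Z w).
Proof.
move=> mY mZ i j; under eq_fun do rewrite mxE.
by apply: measurable_sum => k; exact: measurable_funM.
Qed.

Lemma measurable_det p (Z : S -> 'M[R]_p) :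
  mx_measurable Z -> measurable_fun setT (fun w => \det (Z w)).
Proof.
move=> mZ; apply: measurable_sum => s; apply: measurable_funM => //.
by apply: measurable_prod => i _; exact: mZ.
Qed.

Lemma mx_measurable_adj p (Z : S -> 'M[R]_p) :
  mx_measurable Z -> mx_measurable (fun w => \adj (Z w)).
Proof.
case: p Z => [|p] Z mZ i j; first by case: i.
under eq_fun do rewrite mxE /cofactor.
apply: measurable_funM => //; apply: measurable_det => k l.
by under eq_fun do rewrite !mxE; exact: mZ.
Qed.

Lemma measurable_invr : measurable_fun setT (@GRing.inv R).
Proof.
have -> : [set: R] = [set x | x != 0] `|` [set 0].
  by apply/seteqP; split => x //= _; case: (eqVneq x 0); [right|left].
have m_neq0 : measurable [set x : R | x != 0].
  rewrite (_ : [set x | x != 0] = ~` [set 0]); first exact: measurableC.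
  by apply/seteqP; split => x /= /eqP.
apply/measurable_funU => //; split.
  apply: open_continuous_measurable_fun => [|x]; first exact: open_neq.
  by rewrite inE; exact: inv_continuous.
apply: (eq_measurable_fun (cst (0 : R))) => [x|]; last exact: measurable_cst.
by rewrite inE /= => ->; rewrite invr0.
Qed.

Lemma mx_measurable_invmx p (Z : S -> 'M[R]_p) :
  mx_measurable Z -> mx_measurable (fun w => invmx (Z w)).
Proof.
move=> mZ i j; rewrite (_ : (fun w => _) = fun w =>
    if \det (Z w) == 0 then Z w i j else (\det (Z w))^-1 * \adj (Z w) i j).
  apply: measurable_fun_ifT; [|exact: mZ|].
    by apply: measurable_fun_eqr => //; exact: measurable_det.
  apply: measurable_funM; last exact: mx_measurable_adj.
  exact: measurableT_comp measurable_invr (measurable_det mZ).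
apply/funext => w; rewrite /invmx unitmxE unitfE.
by case: eqP => //= _; rewrite mxE.
Qed.

Lemma measurable_vnorm p (Z : S -> 'cV[R]_p) :
  mx_measurable Z -> measurable_fun setT (fun w => vnorm (Z w)).
Proof.
move=> mZ; apply: (measurableT_comp (continuous_measurable_fun (@sqrt_continuous R))).
by apply: measurable_sum => j; exact: measurable_funX.
Qed.

Lemma measurable_opnorm p q (Z : S -> 'M[R]_(p, q)) :
  mx_measurable Z -> measurable_fun setT (fun w => opnorm (Z w)).
Proof.
move=> mZ; apply: measurable_fun_continuous_comp; first exact: opnorm_continuous.
exact: mx_measurable_rand_mx.
Qed.

Lemma measurable_lt (f : S -> R) (c : R) :
  measurable_fun setT f -> measurable [set w | c < f w].
Proof.
move=> mf; have := mf measurableT `]c, +oo[%classic (measurable_itv _).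
by rewrite setTI; congr measurable; apply/seteqP; split => w /=; rewrite in_itv /= andbT.
Qed.

End borel_measurability.
Section invertibility.
Variable R : realType.

Lemma posdef_unitmx n (M : 'M[R]_n) : posdef M -> M \in unitmx.
Proof.
move=> [_ M_pos]; rewrite unitmxE unitfE; apply/negP => det0.
have [v v0 vM] := det0P det0.
by have := M_pos v^T; rewrite trmx_eq0 v0 trmxK vM mul0mx mxE ltxx => /(_ isT).
Qed.

Lemma mborel_det_eq0 n : mborel [set M : 'M[R]_n | \det M = 0].
Proof.
pose S := g_sigma_algebraType [set U : set 'M[R]_n | open U].
have mid : mx_measurable (fun M : S => (M : 'M[R]_n)).
  by apply: rand_mx_mx_measurable => B; rewrite preimage_id.
by have := measurable_det mid measurableT (measurable_set1 (0 : R)); rewrite setTI.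
Qed.

Lemma usubmx_continuous p q : continuous (fun z : 'cV[R]_(p + q) => usubmx z).
Proof.
move=> z A /nbhs_ballP [e e0 eA]; apply/nbhs_ballP; exists e => // z' [_ zz'].
by apply: eA; split => // i j; rewrite !mxE; exact: zz'.
Qed.

Context {d : measure_display} {T : measurableType d} (P : probability T R).

Lemma not_unitmx_negligible dx dy (Qs : 'cV[R]_dx -> 'M[R]_dy)
    (X xi : T -> 'cV[R]_dx) (Y yi : T -> 'cV[R]_dy) :
  borel_map Qs -> rand_mx X -> rand_mx xi -> ae_law P X (fun x => posdef (Qs x)) ->
  same_law P (fun w => col_mx (xi w) (yi w)) (fun w => col_mx (X w) (Y w)) ->
  P.-negligible [set w | Qs (xi w) \notin unitmx].
Proof.
move=> Qs_borel X_rand xi_rand Qs_pos law.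
pose D := [set x | \det (Qs x) = 0].
have mD : mborel D := Qs_borel _ (@mborel_det_eq0 dy).
have /law : mborel (usubmx @^-1` D : set 'cV[R]_(dx + dy)).
  exact: continuous_borel_map (@usubmx_continuous dx dy) _ mD.
have col_usub (Z : T -> 'cV[R]_dx) (Z' : T -> 'cV[R]_dy) :
    (fun w => col_mx (Z w) (Z' w)) @^-1` (usubmx @^-1` D) = Z @^-1` D.
  by apply/seteqP; split => w /=; rewrite col_mxKu.
rewrite !col_usub.
have -> : [set w | Qs (xi w) \notin unitmx] = xi @^-1` D.
  by apply/seteqP; split => w /=; rewrite unitmxE unitfE negbK => /eqP.
move=> PD; apply/negligibleP; first exact: xi_rand.
apply: (eq_trans PD); apply/negligibleP; first exact: X_rand.
apply: negligibleS Qs_pos => w /= D_Xw /posdef_unitmx.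
by rewrite unitmxE unitfE D_Xw eqxx.
Qed.

End invertibility.

Section exponential_tails.
Variable R : realType.
Context {d : measure_display} {T : measurableType d} (P : probability T R).
Implicit Types (A B : nat -> set T).

Definition exp_tail A := exists K b : R, 0 < K /\ 0 < b /\
  forall n, (0 < n)%N -> (P (A n) <= (K * expR (- (n%:R * b)))%:E)%E.

Definition mexp_tail A := (forall n, (0 < n)%N -> measurable (A n)) /\ exp_tail A.

Lemma mexp_tailU A B : mexp_tail A -> mexp_tail B -> mexp_tail (fun n => A n `|` B n).
Proof.
move=> [mA [KA [bA [KA0 [bA0 hA]]]]] [mB [KB [bB [KB0 [bB0 hB]]]]].
split=> [n n0|]; first exact: measurableU (mA n n0) (mB n n0).
exists (KA + KB), (Num.min bA bB); do 2 (split; first by rewrite ?addr_gt0 ?lt_min ?bA0).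
move=> n n0; apply: le_trans (measureU2 _ (mA n n0) (mB n n0)) _.
have tail_le K b : 0 <= K -> Num.min bA bB <= b ->
    K * expR (- (n%:R * b)) <= K * expR (- (n%:R * Num.min bA bB)).
  by move=> K0 b_ge; rewrite ler_wpM2l // ler_expR lerN2 ler_wpM2l.
rewrite mulrDl EFinD; apply: leeD.
  apply: le_trans (hA n n0) _; rewrite lee_fin tail_le ?ge_min ?lexx //; exact: ltW.
apply: le_trans (hB n n0) _; rewrite lee_fin tail_le ?ge_min ?lexx ?orbT //; exact: ltW.
Qed.

Lemma mexp_tail_null N : measurable N -> P N = 0 -> mexp_tail (fun=> N).
Proof.
move=> mN PN0; split=> // ; exists 1, 1; do 2 split=> //.
by move=> n _; rewrite PN0 lee_fin mulr_ge0 ?expR_ge0.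
Qed.

Lemma exp_tail_sub A B : (forall n, (0 < n)%N -> measurable (A n)) ->
  (forall n, (0 < n)%N -> A n `<=` B n) -> mexp_tail B -> exp_tail A.
Proof.
move=> mA AB [mB [K [b [K0 [b0 hB]]]]]; exists K, b; do 2 split=> //.
move=> n n0; apply: le_trans (hB n n0).
by apply: le_measure; rewrite ?inE; [exact: mA|exact: mB|exact: AB].
Qed.

End exponential_tails.

Section almost_every_covariate.
Variable R : realType.
Context {d : measure_display} {T : measurableType d} (P : probability T R).
Variables (p q : nat) (X : T -> 'M[R]_(p, q)).
Implicit Types (Phi Psi : 'M[R]_(p, q) -> Prop).

Lemma ae_law_mono Phi Psi : (forall x, Phi x -> Psi x) -> ae_law P X Phi -> ae_law P X Psi.
Proof. by move=> PhiPsi; apply: negligibleS => w /= nPsi /PhiPsi. Qed.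

Lemma ae_law_and Phi Psi : ae_law P X Phi -> ae_law P X Psi ->
  ae_law P X (fun x => Phi x /\ Psi x).
Proof.
move=> aePhi aePsi; apply: negligibleS (negligibleU aePhi aePsi) => w /= nPP.
by apply: contrapT => /not_orP [/contrapT ? /contrapT ?]; exact: nPP.
Qed.

Lemma ae_law_forall_nat (Phi : nat -> 'M[R]_(p, q) -> Prop) :
  (forall k, ae_law P X (Phi k)) -> ae_law P X (fun x => forall k, Phi k x).
Proof.
move=> aePhi; apply: negligibleS (negligible_bigcup aePhi) => w /= /existsNP [k nPhi].
by exists k.
Qed.

Lemma ae_exp_tail (A : nat -> 'M[R]_(p, q) -> set T) (K b : 'M[R]_(p, q) -> R) :
  (forall x, 0 < K x /\ 0 < b x) ->
  (forall n, (0 < n)%N -> ae_law P X (fun x =>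
     (P (A n x) <= (K x * expR (- (n%:R * b x)))%:E)%E)) ->
  ae_law P X (fun x => exp_tail P (fun n => A n x)).
Proof.
move=> Kb0 hA; have /ae_law_forall_nat : forall n, ae_law P X (fun x => (0 < n)%N ->
    (P (A n x) <= (K x * expR (- (n%:R * b x)))%:E)%E).
  case=> [|n]; last by apply: ae_law_mono (hA n.+1 isT) => x + _.
  by apply: negligibleS (negligible_set0 P) => w /= nH; apply: nH.
by apply: ae_law_mono => x hx; have [K0 b0] := Kb0 x; exists (K x), (b x).
Qed.

End almost_every_covariate.

Lemma exists_inv_succ_mul_le (R : realType) (L κ : R) : 0 < κ ->
  exists m : nat, m.+1%:R^-1 * L <= κ.
Proof.
move=> κ0; have [L0|L0] := leP L 0.
  by exists 0%N; apply: le_trans (ltW κ0); rewrite mulr_ge0_le0 ?invr_ge0.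
have L1 : 0 < L + 1 := addr_gt0 L0 ltr01.
have [m] := ltr_add_invr (divr_gt0 κ0 L1); rewrite add0r => hm.
exists m; apply: le_trans (_ : m.+1%:R^-1 * (L + 1) <= _).
  by rewrite ler_wpM2l ?invr_ge0 // lerDl.
by rewrite -ler_pdivlMr // ltW.
Qed.

Section regression_residuals.
Variables (R : realType) (d : measure_display) (T : measurableType d).
Variable P : probability T R.
Variables (dx dy : nat) (fs : 'cV[R]_dx -> 'cV[R]_dy) (Qs : 'cV[R]_dx -> 'M[R]_dy).
Variables (X : T -> 'cV[R]_dx) (Y : T -> 'cV[R]_dy).
Variables (xs : nat -> T -> 'cV[R]_dx) (ys : nat -> T -> 'cV[R]_dy).
Variables (fhat : nat -> T -> 'cV[R]_dx -> 'cV[R]_dy)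
          (Qhat : nat -> T -> 'cV[R]_dx -> 'M[R]_dy).
(* Levels for the empirical moments of (ii)-(iii); the theorem takes them at kappa = 1. *)
Variables (cB cC cE : R).

Hypotheses (fs_borel : borel_map fs) (Qs_borel : borel_map Qs) (X_rand : rand_mx X).
Hypothesis Qs_posdef : ae_law P X (fun x => posdef (Qs x)).
Hypotheses (xs_rand : forall i, rand_mx (xs i)) (ys_rand : forall i, rand_mx (ys i)).
Hypothesis data_law : forall i,
  same_law P (fun w => col_mx (xs i w) (ys i w)) (fun w => col_mx (X w) (Y w)).
Hypothesis fhat_rand : forall n x, (0 < n)%N -> rand_mx (fun w => fhat n w x).
Hypothesis Qhat_rand : forall n x, (0 < n)%N -> rand_mx (fun w => Qhat n w x).
Hypothesis fhat_xs_rand : forall n i, (0 < n)%N -> rand_mx (fun w => fhat n w (xs i w)).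
Hypothesis Qhat_xs_rand : forall n i, (0 < n)%N -> rand_mx (fun w => Qhat n w (xs i w)).

Definition fx_dev δ x n := [set w | δ < vnorm (fs x - fhat n w x)].
Definition Qx_dev δ x n := [set w | δ < opnorm (Qs x - Qhat n w x)].
Definition f_dev δ n := [set w | δ ^+ 2 <
  mean (fun i : 'I_n => vnorm (fs (xs i w) - fhat n w (xs i w)) ^+ 2)].
Definition Qinv_dev δ n := [set w | δ ^+ 2 <
  mean (fun i : 'I_n => opnorm (invmx (Qhat n w (xs i w)) - invmx (Qs (xs i w))) ^+ 2)].
Definition Qinv_moment_dev n := [set w |
  cB < Num.sqrt (mean (fun i : 'I_n => opnorm (invmx (Qs (xs i w))) ^+ 2))].
Definition Q_moment_dev n := [set w |
  cC < mean (fun i : 'I_n => opnorm (Qs (xs i w)) ^+ 4) `^ 4^-1].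
Definition eps_moment_dev n := [set w |
  cE < mean (fun i : 'I_n => vnorm (eps_data fs Qs xs ys i w) ^+ 4) `^ 4^-1].

Hypothesis f_dev_tail : forall δ, 0 < δ -> exp_tail P (f_dev δ).
Hypothesis Qinv_dev_tail : forall δ, 0 < δ -> exp_tail P (Qinv_dev δ).
Hypotheses (Qinv_moment_tail : exp_tail P Qinv_moment_dev)
  (Q_moment_tail : exp_tail P Q_moment_dev) (eps_moment_tail : exp_tail P eps_moment_dev).

Definition residual_mean n w x :=
  mean (fun i : 'I_n => vnorm (eps_tilde fs Qs xs ys fhat Qhat n i w x)).

Definition residual_const x :=
  1 + (opnorm (Qs x) + 1) * (cB + 1 + cC * cE) + cB * (cC * cE).

Lemma mx_measurable_comp p q (g : 'cV[R]_dx -> 'M[R]_(p, q)) i :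
  borel_map g -> mx_measurable (fun w => g (xs i w)).
Proof. by move=> g_borel; apply: rand_mx_mx_measurable => B /g_borel; exact: xs_rand. Qed.

Lemma mx_measurable_eps_data i : mx_measurable (eps_data fs Qs xs ys i).
Proof.
apply: mx_measurableM; first exact/mx_measurable_invmx/mx_measurable_comp.
apply: mx_measurableB; first exact: rand_mx_mx_measurable.
exact: mx_measurable_comp.
Qed.

Lemma measurable_fx_dev δ x n : (0 < n)%N -> measurable (fx_dev δ x n).
Proof.
move=> n0; apply/measurable_lt/measurable_vnorm/mx_measurableB.
  exact: mx_measurable_cst.
exact/rand_mx_mx_measurable/fhat_rand.
Qed.

Lemma measurable_Qx_dev δ x n : (0 < n)%N -> measurable (Qx_dev δ x n).
Proof.
move=> n0; apply/measurable_lt/measurable_opnorm/mx_measurableB.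
  exact: mx_measurable_cst.
exact/rand_mx_mx_measurable/Qhat_rand.
Qed.

Lemma mexp_tail_f_dev δ : 0 < δ -> mexp_tail P (f_dev δ).
Proof.
move=> δ0; split=> [n n0|]; last exact: f_dev_tail.
apply/measurable_lt/measurable_funM => //; apply: measurable_sum => i.
apply/measurable_funX/measurable_vnorm/mx_measurableB; first exact: mx_measurable_comp.
exact/rand_mx_mx_measurable/fhat_xs_rand.
Qed.

Lemma mexp_tail_Qinv_dev δ : 0 < δ -> mexp_tail P (Qinv_dev δ).
Proof.
move=> δ0; split=> [n n0|]; last exact: Qinv_dev_tail.
apply/measurable_lt/measurable_funM => //; apply: measurable_sum => i.
apply/measurable_funX/measurable_opnorm/mx_measurableB; apply: mx_measurable_invmx.
  exact/rand_mx_mx_measurable/Qhat_xs_rand.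
exact: mx_measurable_comp.
Qed.

Lemma mexp_tail_Qinv_moment_dev : mexp_tail P Qinv_moment_dev.
Proof.
split=> // n n0; apply: measurable_lt.
apply: (measurableT_comp (continuous_measurable_fun (@sqrt_continuous R))).
apply: measurable_funM => //; apply: measurable_sum => i.
exact/measurable_funX/measurable_opnorm/mx_measurable_invmx/mx_measurable_comp.
Qed.

Lemma mexp_tail_Q_moment_dev : mexp_tail P Q_moment_dev.
Proof.
split=> // n n0; apply/measurable_lt/(measurableT_comp (measurable_powR _)).
apply: measurable_funM => //; apply: measurable_sum => i.
exact/measurable_funX/measurable_opnorm/mx_measurable_comp.
Qed.

Lemma mexp_tail_eps_moment_dev : mexp_tail P eps_moment_dev.
Proof.
split=> // n n0; apply/measurable_lt/(measurableT_comp (measurable_powR _)).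
apply: measurable_funM => //; apply: measurable_sum => i.
exact/measurable_funX/measurable_vnorm/mx_measurable_eps_data.
Qed.

Lemma measurable_residual_event κ x n : (0 < n)%N ->
  measurable [set w | κ < residual_mean n w x].
Proof.
move=> n0; apply/measurable_lt/measurable_funM => //; apply: measurable_sum => i.
apply/measurable_vnorm/mx_measurableB; last first.
  by apply/mx_measurableD/mx_measurableM/mx_measurable_eps_data; exact: mx_measurable_cst.
apply: mx_measurableD; first exact/rand_mx_mx_measurable/fhat_rand.
apply: mx_measurableM; first exact/rand_mx_mx_measurable/Qhat_rand.
apply: mx_measurableM; first exact/mx_measurable_invmx/rand_mx_mx_measurable/Qhat_xs_rand.
apply: mx_measurableB; first exact: rand_mx_mx_measurable.
exact/rand_mx_mx_measurable/fhat_xs_rand.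
Qed.

Lemma residual_mean_le δ x n w : (0 < n)%N -> 0 <= δ <= 1 ->
  (forall i : 'I_n, Qs (xs i w) \in unitmx) ->
  ~ fx_dev δ x n w -> ~ Qx_dev δ x n w -> ~ f_dev δ n w -> ~ Qinv_dev δ n w ->
  ~ Qinv_moment_dev n w -> ~ Q_moment_dev n w -> ~ eps_moment_dev n w ->
  residual_mean n w x <= δ * residual_const x.
Proof.
rewrite /fx_dev /Qx_dev /f_dev /Qinv_dev /Qinv_moment_dev /Q_moment_dev /eps_moment_dev.
move=> n0 δ01 Qs_unit /negP + /negP + /negP + /negP + /negP + /negP + /negP.
rewrite -!leNgt; exact: mean_residual_le.
Qed.

Lemma residual_exp_tail x κ : 0 < κ ->
  (forall m, exp_tail P (fx_dev m.+1%:R^-1 x) /\ exp_tail P (Qx_dev m.+1%:R^-1 x)) ->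
  exp_tail P (fun n => [set w | κ < residual_mean n w x]).
Proof.
move=> κ0 x_tails.
have [m δL] := exists_inv_succ_mul_le (residual_const x) κ0.
set δ : R := m.+1%:R^-1.
have δ0 : 0 < δ by rewrite invr_gt0.
have δ01 : 0 <= δ <= 1 by rewrite ltW //= invf_le1 // ler1n.
have [N [mN N0 singular_N]] := negligible_bigcup (fun i =>
  not_unitmx_negligible Qs_borel X_rand (xs_rand i) Qs_posdef (data_law i)).
have [fx_tail Qx_tail] := x_tails m.
apply: (@exp_tail_sub _ _ _ _ _ (fun n => fx_dev δ x n `|` Qx_dev δ x n `|` f_dev δ n
  `|` Qinv_dev δ n `|` Qinv_moment_dev n `|` Q_moment_dev n `|` eps_moment_dev n `|` N)).
- by move=> n; exact: measurable_residual_event.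
- move=> n n0 w κ_lt; apply: contrapT.
  move=> /not_orP[/not_orP[/not_orP[/not_orP[/not_orP[/not_orP[/not_orP[h1 h2]
    h3] h4] h5] h6] h7] hN].
  have Qs_unit (i : 'I_n) : Qs (xs i w) \in unitmx.
    by apply: contrapT => /negP Qs_sing; apply: hN; apply: singular_N; exists i.
  have := residual_mean_le n0 δ01 Qs_unit h1 h2 h3 h4 h5 h6 h7.
  by move/le_trans/(_ δL); rewrite leNgt κ_lt.
- repeat apply: mexp_tailU.
  + by split=> // n; exact: measurable_fx_dev.
  + by split=> // n; exact: measurable_Qx_dev.
  + exact: mexp_tail_f_dev.
  + exact: mexp_tail_Qinv_dev.
  + exact: mexp_tail_Qinv_moment_dev.
  + exact: mexp_tail_Q_moment_dev.
  + exact: mexp_tail_eps_moment_dev.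
  + exact: mexp_tail_null.
Qed.

End regression_residuals.

Theorem theorem6 (R : realType) (d : measure_display) (T : measurableType d)
  (P : probability T R) (dx dy : nat)
  (fs : 'cV[R]_dx -> 'cV[R]_dy) (Qs : 'cV[R]_dx -> 'M[R]_dy)
  (X : T -> 'cV[R]_dx) (eps : T -> 'cV[R]_dy)
  (xs : nat -> T -> 'cV[R]_dx) (ys : nat -> T -> 'cV[R]_dy)
  (fhat : nat -> T -> 'cV[R]_dx -> 'cV[R]_dy)
  (Qhat : nat -> T -> 'cV[R]_dx -> 'M[R]_dy) :
  (* ---- the model  Y = f*(X) + Q*(X) eps ---- *)
  borel_map fs -> borel_map Qs ->
  rand_mx X -> rand_mx eps -> indep2 P X eps ->
  (forall j : 'I_dy, ('E_P[fun w => eps w j ord0] = 0)%E) ->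
  ae_law P X (fun x => posdef (Qs x)) ->
  (* ---- the data (x^i, y^i), i = 0, 1, 2, ...: i.i.d. copies of (X, Y) ---- *)
  (forall i, rand_mx (xs i)) -> (forall i, rand_mx (ys i)) ->
  mutual_indep P (fun i w => col_mx (xs i w) (ys i w)) ->
  (forall i, same_law P (fun w => col_mx (xs i w) (ys i w))
                        (fun w => col_mx (X w) (fs (X w) + Qs (X w) *m eps w))) ->
  (* ---- the estimates hat f_n, hat Q_n are computed from D_n ---- *)
  (forall n w w', (0 < n)%N ->
     (forall i, (i < n)%N -> xs i w = xs i w' /\ ys i w = ys i w') ->
     fhat n w = fhat n w' /\ Qhat n w = Qhat n w') ->
  (forall n x, (0 < n)%N -> rand_mx (fun w => fhat n w x)) ->
  (forall n x, (0 < n)%N -> rand_mx (fun w => Qhat n w x)) ->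
  (forall n i, (0 < n)%N -> rand_mx (fun w => fhat n w (xs i w))) ->
  (forall n i, (0 < n)%N -> rand_mx (fun w => Qhat n w (xs i w))) ->
  (forall n, (0 < n)%N ->
     ae_law P X (fun x => P.-negligible [set w | (~ posdef (Qhat n w x))%R])) ->
  (* ---- finiteness of the expectations appearing below ---- *)
  P.-integrable setT (fun w => (opnorm (invmx (Qs (X w))) ^+ 2)%:E) ->
  P.-integrable setT (fun w => (opnorm (Qs (X w)) ^+ 4)%:E) ->
  P.-integrable setT (fun w => (vnorm (eps w))%:E) ->
  P.-integrable setT (fun w => (vnorm (eps w) ^+ 4)%:E) ->
  (* ---- assumption (i) ---- *)
  (forall kappa : R, 0 < kappa ->
   exists (Kf bf KQ bQ : 'cV[R]_dx -> R) (Kfb bfb KQb bQb : R),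
     (forall x, 0 < Kf x /\ 0 < bf x /\ 0 < KQ x /\ 0 < bQ x) /\
     0 < Kfb /\ 0 < bfb /\ 0 < KQb /\ 0 < bQb /\
     forall n : nat, (0 < n)%N ->
       ae_law P X (fun x =>
         (P [set w | (kappa < vnorm (fs x - fhat n w x))%R]
            <= ((Kf x * expR (- (n%:R * bf x)))%R)%:E)%E) /\
       ae_law P X (fun x =>
         (P [set w | (kappa < opnorm (Qs x - Qhat n w x))%R]
            <= ((KQ x * expR (- (n%:R * bQ x)))%R)%:E)%E) /\
       (P [set w | (kappa ^+ 2 < n%:R^-1 *
            \sum_(i < n) vnorm (fs (xs i w) - fhat n w (xs i w)) ^+ 2)%R]
          <= ((Kfb * expR (- (n%:R * bfb)))%R)%:E)%E /\
       (P [set w | (kappa ^+ 2 < n%:R^-1 *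
            \sum_(i < n) opnorm (invmx (Qhat n w (xs i w))
                                 - invmx (Qs (xs i w))) ^+ 2)%R]
          <= ((KQb * expR (- (n%:R * bQb)))%R)%:E)%E) ->
  (* ---- assumption (ii) ---- *)
  (forall kappa : R, 0 < kappa ->
   exists gQ gQb : R, 0 < gQ /\ 0 < gQb /\
     forall n : nat, (0 < n)%N ->
       (P [set w | (Num.sqrt (fine 'E_P[fun w => opnorm (invmx (Qs (X w))) ^+ 2])
                     + kappa
                   < Num.sqrt (n%:R^-1 *
                       \sum_(i < n) opnorm (invmx (Qs (xs i w))) ^+ 2))%R]
          <= (expR (- (n%:R * gQ)))%:E)%E /\
       (P [set w | ((fine 'E_P[fun w => opnorm (Qs (X w)) ^+ 4]) `^ (4^-1)
                     + kappa
                   < (n%:R^-1 * \sum_(i < n) opnorm (Qs (xs i w)) ^+ 4) `^ (4^-1))%R]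
          <= (expR (- (n%:R * gQb)))%:E)%E) ->
  (* ---- assumption (iii) ---- *)
  (forall kappa : R, 0 < kappa ->
   exists ge geb : R, 0 < ge /\ 0 < geb /\
     forall n : nat, (0 < n)%N ->
       (P [set w | (fine 'E_P[fun w => vnorm (eps w)] + kappa
                   < n%:R^-1 * \sum_(i < n) vnorm (eps_data fs Qs xs ys i w))%R]
          <= (expR (- (n%:R * ge)))%:E)%E /\
       (P [set w | ((fine 'E_P[fun w => vnorm (eps w) ^+ 4]) `^ (4^-1) + kappa
                   < (n%:R^-1 * \sum_(i < n)
                        vnorm (eps_data fs Qs xs ys i w) ^+ 4) `^ (4^-1))%R]
          <= (expR (- (n%:R * geb)))%:E)%E) ->
  (* ---- conclusion ---- *)
  forall kappa : R, 0 < kappa ->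
  ae_law P X (fun x =>
    exists Kt bt : R, 0 < Kt /\ 0 < bt /\
      forall n : nat, (0 < n)%N ->
        (P [set w | (kappa < n%:R^-1 *
              \sum_(i < n) vnorm (eps_tilde fs Qs xs ys fhat Qhat n i w x))%R]
           <= ((Kt * expR (- (n%:R * bt)))%R)%:E)%E).
Proof.
move=> fs_borel Qs_borel X_rand _ _ _ Qs_posdef xs_rand ys_rand _ data_law _ fhat_rand
  Qhat_rand fhat_xs_rand Qhat_xs_rand _ _ _ _ _ tails_i tails_ii tails_iii κ κ0.
have [gB [gC [gB0 [gC0 tails_Q]]]] := tails_ii 1 ltr01.
have [gm [gE [_ [gE0 tails_eps]]]] := tails_iii 1 ltr01.
have local_i m : ae_law P X (fun x => exp_tail P (fx_dev fs fhat m.+1%:R^-1 x)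
                                    /\ exp_tail P (Qx_dev Qs Qhat m.+1%:R^-1 x)).
  have δ0 : 0 < m.+1%:R^-1 :> R by rewrite invr_gt0.
  have [Kf [bf [KQ [bQ [? [? [? [? [Kb0 [_ [_ [_ [_ h]]]]]]]]]]]]] := tails_i _ δ0.
  apply: ae_law_and;
    [apply: (ae_exp_tail (K := Kf) (b := bf)) | apply: (ae_exp_tail (K := KQ) (b := bQ))].
  - by move=> x; have [? [? _]] := Kb0 x.
  - by move=> n /h [].
  - by move=> x; have [_ [_ []]] := Kb0 x.
  - by move=> n /h [_ []].
apply: ae_law_mono (ae_law_forall_nat local_i) => x x_tails.
apply: (residual_exp_tail fs_borel Qs_borel X_rand Qs_posdef xs_rand ys_rand data_law
  fhat_rand Qhat_rand fhat_xs_rand Qhat_xs_rand) x_tails => //.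
- move=> δ δ0; have [? [? [? [? [Kf [bf [? [? [_ [Kf0 [bf0 [_ [_ h]]]]]]]]]]]]] := tails_i δ δ0.
  by exists Kf, bf; do 2 split=> //; move=> n /h [_ [_ []]].
- move=> δ δ0; have [? [? [? [? [? [? [KQ [bQ [_ [_ [_ [KQ0 [bQ0 h]]]]]]]]]]]]] := tails_i δ δ0.
  by exists KQ, bQ; do 2 split=> //; move=> n /h [_ [_ []]].
- exists 1, gB; do 2 split=> //; move=> n /tails_Q [h _]; rewrite mul1r; exact: h.
- exists 1, gC; do 2 split=> //; move=> n /tails_Q [_ h]; rewrite mul1r; exact: h.
- exists 1, gE; do 2 split=> //; move=> n /tails_eps [_ h]; rewrite mul1r; exact: h.
Qed.
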